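(* Let $\mathbf u$ be an infinite word over a finite alphabet whose language is closed under reversal and whose defect $D(\mathbf u)$ is finite. Let $q$ be a prefix of $\mathbf u$ such that $D(\mathbf u)=D(q)$, and put $H=|q|+1$. Then $$\mathcal C_{\mathbf u}(H)-\mathcal P_{\mathbf u}(H)=2\,\#\{x\in\mathcal L(\mathbf u): x \text{ is a palindrome},\ |x|<H,\ x\notin\mathcal L(q)\}.$$
   Context: For a finite word $w=w_0\cdots w_{n-1}$ its reversal is $\overline{w}=w_{n-1}\cdots w_0$; $w$ is a palindrome if $w=\overline{w}$ (the empty word is a palindrome). $\mathcal L(v)$ denotes the set of factors of a (finite or infinite) word $v$, and $\mathcal L_n(v)$ those of length $n$; the language of $\mathbf u$ is closed under reversal if $w\in\mathcal L(\mathbf u)$ implies $\overline w\in\mathcal L(\mathbf u)$. $\mathcal C_{\mathbf u}(n)=\#\mathcal L_n(\mathbf u)$ and $\mathcal P_{\mathbf u}(n)$ is the number of palindromes in $\mathcal L_n(\mathbf u)$. The defect of a finite word $w$ is $D(w)=|w|+1-(\text{number of distinct palindromic factors of } w, \text{ including the empty word})$; the defect of an infinite word is $D(\mathbf u)=\sup\{D(w): w \text{ a prefix of } \mathbf u\}$. *)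

From mathcomp Require Import all_boot.
From mathcomp Require Import boolp.
Set Implicit Arguments. Unset Strict Implicit. Unset Printing Implicit Defensive.

Definition is_pal (A : eqType) (w : seq A) : bool := w == rev w.

Definition factor (A : Type) (u : nat -> A) (w : seq A) : Prop :=
  exists i, w = mkseq (fun j => u (i + j)) (size w).

Definition pref (A : Type) (u : nat -> A) (n : nat) : seq A := mkseq u n.

Definition closed_under_reversal (A : Type) (u : nat -> A) : Prop :=
  forall w, factor u w -> factor u (rev w).

(* number of distinct palindromic factors of the finite word w,
   including the empty word (counted length by length) *)
Definition npal (A : finType) (w : seq A) : nat :=
  \sum_(n < (size w).+1) #|[set t : n.-tuple A | infix (tval t) w && is_pal (tval t)]|.

Definition defect (A : finType) (w : seq A) : nat := (size w).+1 - npal w.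

Definition cplx (A : finType) (u : nat -> A) (n : nat) : nat :=
  #|[set t : n.-tuple A | `[< factor u (tval t) >] ]|.

Definition pcplx (A : finType) (u : nat -> A) (n : nat) : nat :=
  #|[set t : n.-tuple A | `[< factor u (tval t) >] && is_pal (tval t)]|.

From mathcomp Require Import all_boot.
From mathcomp Require Import boolp.
From mathcomp Require Import zify.
Set Implicit Arguments. Unset Strict Implicit. Unset Printing Implicit Defensive.

(* The non-palindromic factors of length H come in pairs {w, rev w}; in each
   pair choose the word w whose first occurrence ends first.  Since the defect
   does not grow beyond q, every longer prefix of u ends with a palindrome that
   occurs there for the first time, and such a palindrome is unique.  Sending a
   palindrome x outside L(q) with |x| < H to the factor w of length H ending at
   the first occurrence of x is a bijection onto the chosen words: x is a
   suffix of w and, being a palindrome, a prefix of rev w, so rev w first ends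
   later; conversely the new palindromic suffix at the first occurrence of a
   chosen w is shorter than H, since otherwise rev w would occur earlier. *)

Section Palindromes.
Variable A : eqType.
Implicit Types x y w : seq A.

Lemma is_pal_rev w : is_pal (rev w) = is_pal w.
Proof. by rewrite /is_pal revK eq_sym. Qed.

Lemma suffix_size_inj x y w : suffix x w -> suffix y w -> size x = size y -> x = y.
Proof. by rewrite !suffixE => /eqP Ex /eqP Ey E; rewrite -Ex -Ey E. Qed.

Lemma suffix_leq x y w : suffix x w -> suffix y w -> size x <= size y -> suffix x y.
Proof.
move=> /suffixP[s1 ->] /suffixP[s2 E] le_xy.
have le_s2s1 : size s2 <= size s1.
  by have /(congr1 size) := E; rewrite !size_cat; lia.
move: E; rewrite -(cat_take_drop (size s2) s1) -catA => /eqP.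
by rewrite eqseq_cat ?size_takel // => /andP[_ /eqP <-]; apply: suffix_suffix.
Qed.

Lemma pal_suffix_prefix x y : is_pal x -> is_pal y -> suffix x y -> prefix x y.
Proof. by move=> /eqP px /eqP py; rewrite -prefix_rev -px -py. Qed.

(* A palindromic suffix y of [rcons w a] contains any shorter palindromic suffix x
   also as a prefix, hence [x] already occurs in [w]. *)
Lemma new_pal_suffix_uniq w a x y :
  suffix x (rcons w a) -> suffix y (rcons w a) -> is_pal x -> is_pal y ->
  ~~ infix x w -> ~~ infix y w -> x = y.
Proof.
wlog le_xy : x y / size x <= size y.
  move=> W sx sy px py nx ny; case: (leqP (size x) (size y)) => [|/ltnW] le.
    exact: W.
  exact/esym/W.
move=> sx sy px py nx _.
case: ltngtP le_xy => // [lt_xy _|eq_xy _]; last exact: suffix_size_inj sx sy eq_xy.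
have /prefixP[r Er] := pal_suffix_prefix px py (suffix_leq sx sy (ltnW lt_xy)).
case/suffixP: sy => p Ep; case/lastP: r Er => [|r b] Er.
  by move: lt_xy; rewrite Er cats0 ltnn.
move: Ep; rewrite Er catA -rcons_cat => /rcons_inj[Ew _].
by case/negP: nx; rewrite Ew -catA infix_infix.
Qed.
End Palindromes.

Section Defect.
Variable A : finType.
Implicit Types x w : seq A.

Definition pal_factors w n := [set t : n.-tuple A | infix t w && is_pal t].

Definition new_pal_suffixes w a n :=
  [set t : n.-tuple A | [&& suffix t (rcons w a), is_pal t & ~~ infix t w]].

Lemma pal_factors_rcons w a n :
  #|pal_factors (rcons w a) n| <= #|pal_factors w n| + #|new_pal_suffixes w a n|.
Proof.
apply: leq_trans (leq_card_setU _ _); apply: subset_leq_card.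
apply/subsetP => t; rewrite !inE infix_rconsl.
by case: (infix t w) => /= [/andP[_ ->] | ]; rewrite ?orbF ?andbT.
Qed.

Lemma sum_new_pal_suffixes w a K : \sum_(n < K) #|new_pal_suffixes w a n| <= 1.
Proof.
have new_eq (n k : 'I_K) t1 t2 :
    t1 \in new_pal_suffixes w a n -> t2 \in new_pal_suffixes w a k -> n = k /\ val t1 = val t2.
  rewrite !inE => /and3P[s1 p1 n1] /and3P[s2 p2 n2].
  have E := new_pal_suffix_uniq s1 s2 p1 p2 n1 n2.
  by split; [apply: val_inj; rewrite /= -(size_tuple t1) -(size_tuple t2) E|].
case: (pickP (fun n : 'I_K => new_pal_suffixes w a n != set0)) => [n0 /set0Pn[t0 t0n0] | none].
  rewrite (bigD1 n0) //= big1 => [|n neq]; last first.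
    apply/eqP; rewrite cards_eq0; apply: contraNT neq => /set0Pn[t tn].
    by case: (new_eq _ _ _ _ tn t0n0) => /eqP.
  rewrite addn0; apply/card_le1_eqP => t1 t2 t1n0 t2n0.
  by apply: val_inj; have [_ ->] := new_eq _ _ _ _ t1n0 t2n0.
by rewrite big1 // => n _; apply/eqP; rewrite cards_eq0; apply/negbFE/none.
Qed.

Lemma npal_rcons w a :
  npal (rcons w a) <= npal w + \sum_(n < (size w).+2) #|new_pal_suffixes w a n|.
Proof.
have -> : npal w = \sum_(n < (size w).+2) #|pal_factors w n|.
  rewrite [RHS]big_ord_recr /= -[LHS]addn0; congr (_ + _).
  apply/esym/eqP; rewrite cards_eq0; apply/eqP/setP => t; rewrite !inE.
  by apply/negbTE; apply: contraTN isT => /andP[/size_infix]; rewrite size_tuple ltnn.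
rewrite /npal size_rcons -big_split /=; apply: leq_sum => n _; exact: pal_factors_rcons.
Qed.

Lemma npal_leq w : npal w <= (size w).+1.
Proof.
elim/last_ind: w => [|w a IH].
  by rewrite /npal big_ord1; apply: leq_trans (max_card _) _; rewrite card_tuple.
apply: leq_trans (npal_rcons w a) _; rewrite size_rcons.
by have := sum_new_pal_suffixes w a (size w).+2; lia.
Qed.

Lemma defect_rcons w a : defect w <= defect (rcons w a).
Proof.
rewrite /defect size_rcons.
by have := npal_rcons w a; have := sum_new_pal_suffixes w a (size w).+2; lia.
Qed.

Lemma defect_rcons_lt w a :
  (forall x, suffix x (rcons w a) -> is_pal x -> infix x w) ->
  defect w < defect (rcons w a).
Proof.
move=> no_new; have := npal_rcons w a; rewrite big1 => [|n _].
  by rewrite /defect size_rcons addn0; have := npal_leq w; lia.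
apply/eqP; rewrite cards_eq0; apply/eqP/setP => t; rewrite !inE.
by apply/negbTE/and3P => -[st pt]; rewrite no_new.
Qed.
End Defect.

Section InfiniteWord.
Variables (A : finType) (u : nat -> A).
Implicit Types x y w : seq A.

Lemma size_pref e : size (pref u e) = e.
Proof. exact: size_mkseq. Qed.

Lemma prefS e : pref u e.+1 = rcons (pref u e) (u e).
Proof. exact: mkseqS. Qed.

Lemma pref_add i k : pref u (i + k) = pref u i ++ mkseq (fun j => u (i + j)) k.
Proof. by elim: k => [|k IH]; rewrite ?addn0 ?cats0 // addnS prefS IH mkseqS rcons_cat. Qed.

Lemma prefix_pref e e' : e <= e' -> prefix (pref u e) (pref u e').
Proof. by move=> le_ee'; rewrite -(subnKC le_ee') pref_add prefix_prefix. Qed.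

Lemma infix_pref_mono x e e' : e <= e' -> infix x (pref u e) -> infix x (pref u e').
Proof. by move=> le_ee' inf; apply: infix_prefix_trans inf (prefix_pref le_ee'). Qed.

Lemma take_pref k e : k <= e -> take k (pref u e) = pref u k.
Proof. by move=> le_ke; rewrite -(subnKC le_ke) pref_add take_size_cat ?size_pref. Qed.

Lemma factorP w : factor u w <-> exists e, infix w (pref u e).
Proof.
split=> [[i ->]|[e /infixP[s [s' E]]]].
  by exists (i + size w); rewrite pref_add suffix_infix.
exists (size s); have le_e : size s + size w <= e.
  by rewrite -(size_pref e) E !size_cat addnA leq_addr.
have := take_pref le_e; rewrite E catA take_size_cat ?size_cat // pref_add.
rewrite -(take_pref (leq_trans (leq_addr _ _) le_e)) E take_size_cat //.
by move/(congr1 (drop (size s))); rewrite !drop_size_cat.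
Qed.

Lemma factor_infix_pref w e : infix w (pref u e) -> factor u w.
Proof. by move=> inf; apply/factorP; exists e. Qed.

(* The end of the first occurrence of [w]; junk value 0 if [w] is not a factor. *)
Definition first_end w : nat :=
  if pselect (exists e, infix w (pref u e)) is left P then ex_minn P else 0.

Lemma first_endP w : factor u w ->
  infix w (pref u (first_end w)) /\ (forall e, infix w (pref u e) -> first_end w <= e).
Proof. by move/factorP=> fw; rewrite /first_end; case: pselect => // P; case: ex_minnP. Qed.

Lemma first_end_min w e : infix w (pref u e) -> first_end w <= e.
Proof. by move=> inf; apply: (first_endP (factor_infix_pref inf)).2. Qed.

Lemma first_end_eq w e : infix w (pref u e) ->
  (forall e', infix w (pref u e') -> e <= e') -> first_end w = e.
Proof.
move=> inf min; have [inf' _] := first_endP (factor_infix_pref inf).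
by apply/eqP; rewrite eqn_leq first_end_min // min.
Qed.

Lemma suffix_first_end w : factor u w -> w != [::] -> suffix w (pref u (first_end w)).
Proof.
move=> fw w0; have [] := first_endP fw; case: (first_end w) => [|e].
  by move/size_infix; rewrite size_pref leqn0 size_eq0 (negbTE w0).
by rewrite prefS infix_rconsl => /orP[//|inf] /(_ _ inf); rewrite ltnn.
Qed.

Lemma infix_pref_prefix x y e : prefix x y -> suffix y (pref u e) ->
  infix x (pref u (e - size y + size x)).
Proof.
move=> /prefixP[s ->] /suffixP[p E].
have sz : size p + size (x ++ s) = e by rewrite -(size_pref e) E !size_cat.
have -> : e - size (x ++ s) + size x = size p + size x by rewrite -sz size_cat; lia.
have le_e : size p + size x <= e by rewrite -sz size_cat; lia.
rewrite -(take_pref le_e) E catA take_size_cat ?size_cat //; exact: suffix_infix.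
Qed.

Lemma first_end_prefix x y : prefix x y -> factor u y ->
  first_end x + size y <= first_end y + size x.
Proof.
have [-> | y0] := eqVneq y [::].
  by rewrite prefixs0 => /eqP -> _.
move=> pxy fy; have sy := suffix_first_end fy y0.
have le_y : size y <= first_end y by rewrite -[X in _ <= X]size_pref size_suffix.
by have := first_end_min (infix_pref_prefix pxy sy); lia.
Qed.

Definition window e k := mkseq (fun j => u (e - k + j)) k.

Lemma size_window e k : size (window e k) = k.
Proof. exact: size_mkseq. Qed.

Lemma window_tupleP e k : size (window e k) == k.
Proof. by rewrite size_window. Qed.

Canonical window_tuple e k := Tuple (window_tupleP e k).

Lemma window_suffix e k : k <= e -> suffix (window e k) (pref u e).
Proof. by move=> le_ke; rewrite -{2}(subnK le_ke) pref_add suffix_suffix. Qed.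

Lemma suffix_prefE w e : suffix w (pref u e) -> window e (size w) = w.
Proof.
move=> sw; have le_we : size w <= e by rewrite -[X in _ <= X]size_pref size_suffix.
by apply: suffix_size_inj (window_suffix le_we) sw _; rewrite size_window.
Qed.
End InfiniteWord.

Section Reversal.
Variables (A : finType) (u : nat -> A).
Implicit Types w : seq A.

Definition nonpal_factors n := [set t : n.-tuple A | `[< factor u t >] && ~~ is_pal t].

Definition first_before_rev w : bool :=
  `[< factor u w >] && (first_end u w < first_end u (rev w)).

Lemma cplx_sub_pcplx n : cplx u n - pcplx u n = #|nonpal_factors n|.
Proof.
set F := [set t : n.-tuple A | `[< factor u t >]].
set P := [set t : n.-tuple A | is_pal t].
have -> : pcplx u n = #|F :&: P| by apply: eq_card => t; rewrite !inE.
rewrite /cplx -/F -(cardsID P F) addKn.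
by apply: eq_card => t; rewrite !inE andbC.
Qed.

Hypothesis rev_closed : closed_under_reversal u.

Lemma factor_rev w : factor u (rev w) <-> factor u w.
Proof. by split=> [/rev_closed|/rev_closed //]; rewrite revK. Qed.

Lemma first_end_rev_pal w : factor u w ->
  first_end u (rev w) = first_end u w -> is_pal w.
Proof.
have [-> //| w0] := eqVneq w [::].
move=> fw eq_end; apply/eqP/(suffix_size_inj (suffix_first_end fw w0)).
- rewrite -eq_end; apply: suffix_first_end; first exact/factor_rev.
  by rewrite -size_eq0 size_rev size_eq0.
- by rewrite size_rev.
Qed.

Lemma first_before_rev_nonpal w : first_before_rev w -> ~~ is_pal w.
Proof. by case/andP=> _; apply: contraTN => /eqP {1}->; rewrite ltnn. Qed.

Lemma first_before_rev_rev w : factor u w -> ~~ is_pal w ->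
  first_before_rev (rev w) = ~~ first_before_rev w.
Proof.
move=> fw npal_w; have ne_w : first_end u (rev w) != first_end u w.
  by apply: contra npal_w => /eqP /(first_end_rev_pal fw).
have /asboolP fr := (factor_rev w).2 fw.
by rewrite /first_before_rev fr (asboolT fw) revK ltn_neqAle ne_w leqNgt.
Qed.

Lemma card_nonpal_factors n :
  #|nonpal_factors n| = 2 * #|[set t : n.-tuple A | first_before_rev t]|.
Proof.
set E := [set t : n.-tuple A | first_before_rev t].
have rev_inj : injective (@rev_tuple n A).
  by move=> t1 t2 /(congr1 val) /(congr1 rev); rewrite /= !revK => /val_inj.
rewrite -(cardsID E) mul2n -addnn; congr (_ + _).
  apply: eq_card => t; rewrite !inE andbC; case ft: (first_before_rev t) => //=.
  by move: (ft) => /andP[-> _]; rewrite first_before_rev_nonpal.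
rewrite -[RHS](card_imset _ rev_inj); apply: eq_card => t.
apply/idP/imsetP => [|[t' + ->]]; rewrite !inE.
  move=> /and3P[early_t /asboolP ft npal_t]; exists (rev_tuple t).
    by rewrite inE first_before_rev_rev.
  by apply: val_inj; rewrite /= revK.
move=> early_t'; have /andP[/asboolP ft' _] := early_t'.
have npal_t' := first_before_rev_nonpal early_t'.
rewrite /= first_before_rev_rev // early_t' is_pal_rev npal_t' andbT /=.
exact/asboolP/factor_rev.
Qed.
End Reversal.

Section StableDefect.
Variables (A : finType) (u : nat -> A) (m : nat).
Implicit Types x y w : seq A.

Lemma defect_pref_mono n n' : n <= n' -> defect (pref u n) <= defect (pref u n').
Proof.
elim: n' => [|n' IH]; first by rewrite leqn0 => /eqP ->.
rewrite leq_eqVlt => /orP[/eqP -> //|/IH le_n].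
by apply: leq_trans le_n _; rewrite prefS defect_rcons.
Qed.

Hypothesis rev_closed : closed_under_reversal u.
Hypothesis defect_max : forall n, defect (pref u n) <= defect (pref u m).

Lemma new_pal_suffix_exists e : m <= e ->
  exists x, [/\ is_pal x, suffix x (pref u e.+1) & ~~ infix x (pref u e)].
Proof.
move=> le_me; apply: contrapT => no_new.
have : defect (pref u e) < defect (pref u e.+1).
  rewrite prefS; apply: defect_rcons_lt => x sx px; apply: contrapT => nx.
  by apply: no_new; exists x; rewrite prefS; split=> //; apply/negP.
by have := defect_max e.+1; have := defect_pref_mono le_me; lia.
Qed.

Definition late_pal x : bool := [&& `[< factor u x >], is_pal x & ~~ infix x (pref u m)].

Lemma late_pal_first_end x : late_pal x ->
  m < first_end u x /\ suffix x (pref u (first_end u x)).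
Proof.
move=> /and3P[/asboolP fx _ nx]; have x0 : x != [::].
  by apply: contraNneq nx => ->; apply: infix0s.
have sx := suffix_first_end fx x0; split=> //.
by rewrite ltnNge; apply: contra nx => /infix_pref_mono; apply; apply: suffixW.
Qed.

Section LatePal.
Variable x : seq A.
Hypotheses (late_x : late_pal x) (size_x : size x <= m).

Let w := window u (first_end u x) m.+1.

Lemma suffix_window_late_pal : suffix x w.
Proof.
have [lt_m sx] := late_pal_first_end late_x.
by apply: suffix_leq sx (window_suffix u lt_m) _; rewrite size_window ltnW.
Qed.

Lemma first_end_window_late_pal : first_end u w = first_end u x.
Proof.
have [lt_m _] := late_pal_first_end late_x.
apply: first_end_eq; first exact/suffixW/window_suffix.
by move=> e /(infix_trans (suffixW suffix_window_late_pal)); apply: first_end_min.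
Qed.

Lemma first_before_rev_window_late_pal : first_before_rev u w.
Proof.
have [lt_m _] := late_pal_first_end late_x.
have fw : factor u w by apply: factor_infix_pref (suffixW (window_suffix u lt_m)).
have /and3P[_ /eqP px _] := late_x.
have prx : prefix x (rev w) by rewrite px prefix_rev suffix_window_late_pal.
have := first_end_prefix prx ((factor_rev rev_closed w).2 fw).
by rewrite /first_before_rev (asboolT fw) first_end_window_late_pal size_rev size_window; lia.
Qed.
End LatePal.

Lemma window_late_pal_inj x y : late_pal x -> late_pal y -> size x <= m -> size y <= m ->
  window u (first_end u x) m.+1 = window u (first_end u y) m.+1 -> x = y.
Proof.
move=> lx ly sx sy eq_w.
have eq_end : first_end u x = first_end u y.
  by rewrite -(first_end_window_late_pal lx sx) eq_w first_end_window_late_pal.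
have [lt_x sfx] := late_pal_first_end lx; have [_ sfy] := late_pal_first_end ly.
have new z : first_end u z = first_end u x -> ~~ infix z (pref u (first_end u x).-1).
  by move=> ez; apply/negP => /first_end_min; lia.
move: sfy (new _ (esym eq_end)) (new _ erefl); rewrite -eq_end.
case: (first_end u x) lt_x sfx => // e _; rewrite prefS => sfx sfy ny nx.
case/and3P: lx => _ px _; case/and3P: ly => _ py _.
exact: new_pal_suffix_uniq sfx sfy px py nx ny.
Qed.

Lemma first_before_rev_window w : size w = m.+1 -> first_before_rev u w ->
  exists2 x, late_pal x && (size x <= m) & window u (first_end u x) m.+1 = w.
Proof.
move=> sw /andP[/asboolP fw lt_w].
have w0 : w != [::] by rewrite -size_eq0 sw.
have sfw := suffix_first_end fw w0.
have : size w <= first_end u w by rewrite -[X in _ <= X](size_pref u) size_suffix.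
rewrite sw; case: (first_end u w) lt_w sfw => // e lt_w sfw le_me.
have [x [px sfx nx]] := new_pal_suffix_exists le_me.
have end_x : first_end u x = e.+1.
  apply: first_end_eq (suffixW sfx) _ => e' inf; rewrite ltnNge.
  by apply: contra nx => /infix_pref_mono; apply.
have size_x : size x <= m.
  rewrite leqNgt; apply/negP => lt_mx.
  have pre : prefix (rev w) x.
    by rewrite (eqP px) prefix_rev; apply: suffix_leq sfw sfx _; rewrite sw.
  have := first_end_prefix pre (factor_infix_pref (suffixW sfx)).
  by rewrite end_x size_rev sw; move: lt_w; lia.
exists x; last by rewrite end_x -sw suffix_prefE.
rewrite size_x andbT; apply/and3P; split=> //.
  exact/asboolP/(factor_infix_pref (suffixW sfx)).
by apply: contra nx => /infix_pref_mono; apply.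
Qed.

Lemma card_first_before_rev :
  #|[set t : m.+1.-tuple A | first_before_rev u t]| =
  \sum_(n < m.+1) #|[set t : n.-tuple A | late_pal t]|.
Proof.
pose img n :=
  [set window_tuple u (first_end u t) m.+1 | t : n.-tuple A in [set t : n.-tuple A | late_pal t]].
have -> : [set t : m.+1.-tuple A | first_before_rev u t] = \bigcup_(n < m.+1) img n.
  apply/setP => w; rewrite inE; apply/idP/bigcupP => [|[n _ /imsetP[t + ->]]].
    case/(first_before_rev_window (size_tuple w)) => x /andP[lx sx] ew.
    exists (Ordinal (sx : size x < m.+1)) => //; apply/imsetP; exists (in_tuple x).
      by rewrite inE.
    by apply: val_inj; rewrite /= ew.
  rewrite inE => lt; apply: first_before_rev_window_late_pal => //.
  by rewrite size_tuple -ltnS.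
rewrite -sum1_card partition_disjoint_bigcup => [|i j neq_ij].
  apply: eq_bigr => n _; rewrite sum1_card card_in_imset // => t1 t2.
  rewrite !inE => l1 l2 /(congr1 val) /= eq_w; apply: val_inj.
  by apply: window_late_pal_inj eq_w; rewrite // size_tuple -ltnS.
apply/pred0P => w /=; apply/negbTE/andP => -[/imsetP[t1 + ->] /imsetP[t2 +]].
rewrite !inE => l1 l2 /(congr1 val) /= eq_w; move/negP: neq_ij; apply.
have s1 : size t1 <= m by rewrite size_tuple -ltnS.
have s2 : size t2 <= m by rewrite size_tuple -ltnS.
have := congr1 size (window_late_pal_inj l1 l2 s1 s2 eq_w).
by rewrite !size_tuple => /val_inj ->.
Qed.
End StableDefect.

Theorem lemma9 (A : finType) (u : nat -> A) (m : nat) :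
  closed_under_reversal u ->
  (* D(u) is finite *)
  (exists B, forall n, defect (pref u n) <= B) ->
  (* q = pref u m satisfies D(u) = D(q), i.e. sup_n D(pref u n) = D(q) *)
  (forall n, defect (pref u n) <= defect (pref u m)) ->
  let q := pref u m in
  let H := (size q).+1 in
  cplx u H - pcplx u H =
  2 * \sum_(n < H)
        #|[set t : n.-tuple A |
            [&& `[< factor u (tval t) >], is_pal (tval t) & ~~ infix (tval t) q]]|.
Proof.
(* Finiteness of the defect is implied by the third hypothesis. *)
move=> rev_closed _ defect_max q H; rewrite /H /q size_pref.
by rewrite cplx_sub_pcplx card_nonpal_factors // card_first_before_rev.
Qed.
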